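(* In the setting of the context (the canonical generalized multi-time Lagrange space associated with a quadratic multi-time Lagrangian, with its Cartan connection $C\Gamma$), the global generalized Einstein equations $Ric(C\Gamma)-\frac{Sc(C\Gamma)}{2}G=\mathcal{K}\mathcal{T}$, where $\mathcal{K}$ is a constant and $\mathcal{T}$ is a d-tensor with adapted components $\mathcal{T}_{AB}$, $A,B\in\{\alpha,\ i,\ {}^{(\alpha)}_{(i)}\}$, are locally equivalent to $$H_{\alpha\beta}-\frac{H+R}{2}h_{\alpha\beta}=\mathcal{K}\mathcal{T}_{\alpha\beta},\qquad R_{ij}-\frac{H+R}{2}g_{ij}=\mathcal{K}\mathcal{T}_{ij},\qquad -\frac{H+R}{2}h^{\alpha\beta}g_{ij}=\mathcal{K}\mathcal{T}^{(\alpha)(\beta)}_{(i)(j)},$$ $$0=\mathcal{T}_{\alpha i},\quad R_{i\alpha}=\mathcal{K}\mathcal{T}_{i\alpha},\quad 0=\mathcal{T}^{(\alpha)}_{(i)\beta},\quad 0=\mathcal{T}^{\ (\beta)}_{\alpha(i)},\quad 0=\mathcal{T}^{\ (\alpha)}_{i(j)},\quad 0=\mathcal{T}^{(\alpha)}_{(i)j},$$ where $H_{\alpha\beta}=H^\mu_{\alpha\beta\mu}$, $R_{ij}=R^m_{ijm}$, $R_{i\alpha}=R^m_{i\alpha m}$, $H=h^{\alpha\beta}H_{\alpha\beta}$, $R=g^{ij}R_{ij}$.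
   Context: Setting: $T$ is a $p$-dimensional manifold (coordinates $t^\alpha$) with semi-Riemannian metric $h_{\alpha\beta}(t)$ (inverse $h^{\alpha\beta}$, Christoffel symbols $H^\gamma_{\alpha\beta}$); $M$ is $n$-dimensional; on $J^1(T,M)$ (coordinates $(t^\alpha,x^i,x^i_\alpha)$) $L=G^{(\alpha)(\beta)}_{(i)(j)}(t,x)x^i_\alpha x^j_\beta+U^{(\alpha)}_{(i)}(t,x)x^i_\alpha+F(t,x)$ with $G^{(\alpha)(\beta)}_{(i)(j)}=\frac12\partial^2L/\partial x^i_\alpha\partial x^j_\beta$ symmetric, rank $n$, constant signature in $i,j$; $g_{ij}=\frac1p h_{\mu\nu}G^{(\mu)(\nu)}_{(i)(j)}$ with inverse $g^{ij}$ and generalized Christoffel symbols $\Gamma^i_{jk}$ in $x$. Nonlinear connection $M^{(i)}_{(\alpha)\beta}=-H^\gamma_{\alpha\beta}x^i_\gamma$, $N^{(i)}_{(\alpha)j}=\Gamma^i_{jm}x^m_\alpha+\frac{g^{im}}{2}\frac{\partial g_{jm}}{\partial t^\alpha}$; adapted cobasis $dt^\alpha$, $dx^i$, $\delta x^i_\alpha=dx^i_\alpha+M^{(i)}_{(\alpha)\beta}dt^\beta+N^{(i)}_{(\alpha)j}dx^j$; $\frac{\delta}{\delta t^\alpha}=\partial_{t^\alpha}-M^{(j)}_{(\beta)\alpha}\partial_{x^j_\beta}$, $\frac{\delta}{\delta x^i}=\partial_{x^i}-N^{(j)}_{(\beta)i}\partial_{x^j_\beta}$. The gravitational potential is $G=h_{\alpha\beta}dt^\alpha\otimes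 dt^\beta+g_{ij}dx^i\otimes dx^j+h^{\alpha\beta}g_{ij}\delta x^i_\alpha\otimes\delta x^j_\beta$. Cartan connection $C\Gamma$: $H^\gamma_{\alpha\beta}$, $G^k_{j\gamma}=\frac{g^{km}}{2}\frac{\delta g_{mj}}{\delta t^\gamma}$, $L^i_{jk}=\frac{g^{im}}{2}(\frac{\delta g_{jm}}{\delta x^k}+\frac{\delta g_{km}}{\delta x^j}-\frac{\delta g_{jk}}{\delta x^m})$, $C^{i(\gamma)}_{j(k)}=\frac{g^{im}}{2}(\frac{\partial g_{jm}}{\partial x^k_\gamma}+\frac{\partial g_{km}}{\partial x^j_\gamma}-\frac{\partial g_{jk}}{\partial x^m_\gamma})$. Curvatures: $H^\alpha_{\eta\beta\gamma}=\frac{\delta H^\alpha_{\eta\beta}}{\delta t^\gamma}-\frac{\delta H^\alpha_{\eta\gamma}}{\delta t^\beta}+H^\mu_{\eta\beta}H^\alpha_{\mu\gamma}-H^\mu_{\eta\gamma}H^\alpha_{\mu\beta}$; $R^l_{i\beta k}=\frac{\delta G^l_{i\beta}}{\delta x^k}-\frac{\delta L^l_{ik}}{\delta t^\beta}+G^m_{i\beta}L^l_{mk}-L^m_{ik}G^l_{m\beta}+C^{l(\mu)}_{i(m)}R^{(m)}_{(\mu)\beta k}$; $R^l_{ijk}=\frac{\delta L^l_{ij}}{\delta x^k}-\frac{\delta L^l_{ik}}{\delta x^j}+L^m_{ij}L^l_{mk}-L^m_{ik}L^l_{mj}+C^{l(\mu)}_{i(m)}R^{(m)}_{(\mu)jk}$;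 $P^{l\,(\gamma)}_{i\beta(k)}=\frac{\partial G^l_{i\beta}}{\partial x^k_\gamma}-C^{l(\gamma)}_{i(k)/\beta}+C^{l(\mu)}_{i(m)}P^{(m)(\gamma)}_{(\mu)\beta(k)}$; $P^{l\,(\gamma)}_{ij(k)}=\frac{\partial L^l_{ij}}{\partial x^k_\gamma}-C^{l(\gamma)}_{i(k)|j}+C^{l(\mu)}_{i(m)}P^{(m)(\gamma)}_{(\mu)j(k)}$; $S^{l(\beta)(\gamma)}_{i(j)(k)}=\frac{\partial C^{l(\beta)}_{i(j)}}{\partial x^k_\gamma}-\frac{\partial C^{l(\gamma)}_{i(k)}}{\partial x^j_\beta}+C^{m(\beta)}_{i(j)}C^{l(\gamma)}_{m(k)}-C^{m(\gamma)}_{i(k)}C^{l(\beta)}_{m(j)}$, with $R^{(m)}_{(\mu)\beta k}=\frac{\delta M^{(m)}_{(\mu)\beta}}{\delta x^k}-\frac{\delta N^{(m)}_{(\mu)k}}{\delta t^\beta}$, $R^{(m)}_{(\mu)jk}=\frac{\delta N^{(m)}_{(\mu)j}}{\delta x^k}-\frac{\delta N^{(m)}_{(\mu)k}}{\delta x^j}$, $P^{(m)(\gamma)}_{(\mu)\beta(k)}=\frac{\partial M^{(m)}_{(\mu)\beta}}{\partial x^k_\gamma}-\delta^\gamma_\mu G^m_{k\beta}+\delta^m_kH^\gamma_{\mu\beta}$, $P^{(m)(\gamma)}_{(\mu)j(k)}=\frac{\partial N^{(m)}_{(\mu)j}}{\partial x^k_\gamma}-\delta^\gamma_\mu L^m_{jk}$,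 and ''$_{/\beta}$'', ''$_{|j}$'' the horizontal covariant derivatives of $C\Gamma$. The Ricci d-tensor is $Ric(C\Gamma)=R_{\alpha\beta}dt^\alpha\otimes dt^\beta+R_{i\alpha}dx^i\otimes dt^\alpha+R_{ij}dx^i\otimes dx^j+R^{\ (\alpha)}_{i(j)}dx^i\otimes\delta x^j_\alpha+R^{(\alpha)}_{(i)\beta}\delta x^i_\alpha\otimes dt^\beta+R^{(\alpha)}_{(i)j}\delta x^i_\alpha\otimes dx^j+R^{(\alpha)(\beta)}_{(i)(j)}\delta x^i_\alpha\otimes\delta x^j_\beta$ (no $dt\otimes dx$ or $dt\otimes\delta x$ components), with $R_{\alpha\beta}=H^\mu_{\alpha\beta\mu}$, $R_{i\alpha}=R^m_{i\alpha m}$, $R_{ij}=R^m_{ijm}$, $R^{\ (\alpha)}_{i(j)}=-P^{m\ (\alpha)}_{im(j)}$, $R^{(\alpha)}_{(i)j}=P^{m\ (\alpha)}_{ij(m)}$, $R^{(\alpha)}_{(i)\beta}=P^{m\ (\alpha)}_{i\beta(m)}$, $R^{(\alpha)(\beta)}_{(i)(j)}=S^{m(\beta)(\alpha)}_{i(j)(m)}$. The scalar curvature is $Sc(C\Gamma)=h^{\alpha\beta}R_{\alpha\beta}+g^{ij}R_{ij}+h_{\alpha\beta}g^{ij}R^{(\alpha)(\beta)}_{(i)(j)}$. The stress-energy d-tensor $\mathcal{T}$ is expanded in the same adapted tensor basis, e.g. $\mathcal{T}_{\alpha i}$ is its $dt^\alpha\otimes dx^i$ component and $\mathcal{T}^{\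 (\beta)}_{\alpha(i)}$ its $dt^\alpha\otimes\delta x^i_\beta$ component. *)

From HB Require Import structures.
From mathcomp Require Import all_boot all_order all_algebra.
From mathcomp Require Import all_classical all_reals all_analysis.

Set Implicit Arguments.
Unset Strict Implicit.
Unset Printing Implicit Defensive.

Import Order.TTheory GRing.Theory Num.Theory.
Local Open Scope ring_scope.

(* Local coordinates on J^1(T,M): a point is (t, x, X) with
   t = (t^alpha) : 'rV_p, x = (x^i) : 'rV_n, X alpha i = x^i_alpha.
   The coordinate chart is modelled by the whole coordinate space.
   Greek indices range over 'I_p, Latin indices over 'I_n. *)

Section MultiTimeEinstein.
Variables (R : realType) (p n : nat).
Variable h : 'rV[R]_p -> 'M[R]_p.
(* G^{(alpha)(beta)}_{(i)(j)}(t,x) = GG t x alpha beta i j *)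
Variable GG : 'rV[R]_p -> 'rV[R]_n -> 'I_p -> 'I_p -> 'I_n -> 'I_n -> R.

Definition Jfun := 'rV[R]_p -> 'rV[R]_n -> 'M[R]_(p, n) -> R.

Definition pt (a : 'I_p) (f : Jfun) : Jfun := fun t x X =>
  derive1 (fun s : R => f (t + s *: delta_mx 0 a) x X) 0.
Definition px (k : 'I_n) (f : Jfun) : Jfun := fun t x X =>
  derive1 (fun s : R => f t (x + s *: delta_mx 0 k) X) 0.
Definition pX (c : 'I_p) (k : 'I_n) (f : Jfun) : Jfun := fun t x X =>
  derive1 (fun s : R => f t x (X + s *: delta_mx c k)) 0.

Definition hJ (a b : 'I_p) : Jfun := fun t _ _ => h t a b.
Definition hinvJ (a b : 'I_p) : Jfun := fun t _ _ => invmx (h t) a b.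

Definition Hchr (c a b : 'I_p) : Jfun := fun t x X =>
  2^-1 * \sum_(m < p) invmx (h t) c m *
    (pt a (hJ m b) t x X + pt b (hJ m a) t x X - pt m (hJ a b) t x X).

Definition gval (t : 'rV[R]_p) (x : 'rV[R]_n) (i j : 'I_n) : R :=
  p%:R^-1 * \sum_(m < p) \sum_(v < p) h t m v * GG t x m v i j.
Definition gmat t x : 'M[R]_n := \matrix_(i, j) gval t x i j.
Definition gJ (i j : 'I_n) : Jfun := fun t x _ => gval t x i j.
Definition ginvJ (i j : 'I_n) : Jfun := fun t x _ => invmx (gmat t x) i j.

Definition Gam (i j k : 'I_n) : Jfun := fun t x X =>
  2^-1 * \sum_(m < n) ginvJ i m t x X *
    (px k (gJ j m) t x X + px j (gJ k m) t x X - px m (gJ j k) t x X).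

(* nonlinear connection: Mnl i a b = M^{(i)}_{(a)b}, Nnl i a j = N^{(i)}_{(a)j} *)
Definition Mnl (i : 'I_n) (a b : 'I_p) : Jfun := fun t x X =>
  - \sum_(c < p) Hchr c a b t x X * X c i.
Definition Nnl (i : 'I_n) (a : 'I_p) (j : 'I_n) : Jfun := fun t x X =>
  \sum_(m < n) Gam i j m t x X * X a m
  + 2^-1 * \sum_(m < n) ginvJ i m t x X * pt a (gJ j m) t x X.

Definition dt (a : 'I_p) (f : Jfun) : Jfun := fun t x X =>
  pt a f t x X - \sum_(j < n) \sum_(b < p) Mnl j b a t x X * pX b j f t x X.
Definition dx (i : 'I_n) (f : Jfun) : Jfun := fun t x X =>
  px i f t x X - \sum_(j < n) \sum_(b < p) Nnl j b i t x X * pX b j f t x X.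

(* Cartan connection: Gc k j c = G^k_{jc}, Lc i j k = L^i_{jk},
   Cc i c j k = C^{i(c)}_{j(k)} *)
Definition Gc (k j : 'I_n) (c : 'I_p) : Jfun := fun t x X =>
  2^-1 * \sum_(m < n) ginvJ k m t x X * dt c (gJ m j) t x X.
Definition Lc (i j k : 'I_n) : Jfun := fun t x X =>
  2^-1 * \sum_(m < n) ginvJ i m t x X *
    (dx k (gJ j m) t x X + dx j (gJ k m) t x X - dx m (gJ j k) t x X).
Definition Cc (i : 'I_n) (c : 'I_p) (j k : 'I_n) : Jfun := fun t x X =>
  2^-1 * \sum_(m < n) ginvJ i m t x X *
    (pX c k (gJ j m) t x X + pX c j (gJ k m) t x X - pX c m (gJ j k) t x X).

Definition Hcurv (a e b c : 'I_p) : Jfun := fun t x X =>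
  dt c (Hchr a e b) t x X - dt b (Hchr a e c) t x X
  + \sum_(u < p) (Hchr u e b t x X * Hchr a u c t x X
                  - Hchr u e c t x X * Hchr a u b t x X).

Definition Rnl1 (m : 'I_n) (u b : 'I_p) (k : 'I_n) : Jfun := fun t x X =>
  dx k (Mnl m u b) t x X - dt b (Nnl m u k) t x X.
Definition Rnl2 (m : 'I_n) (u : 'I_p) (j k : 'I_n) : Jfun := fun t x X =>
  dx k (Nnl m u j) t x X - dx j (Nnl m u k) t x X.
Definition Pnl1 (m : 'I_n) (c u b : 'I_p) (k : 'I_n) : Jfun := fun t x X =>
  pX c k (Mnl m u b) t x X - (c == u)%:R * Gc m k b t x X
  + (m == k)%:R * Hchr c u b t x X.
Definition Pnl2 (m : 'I_n) (c u : 'I_p) (j k : 'I_n) : Jfun := fun t x X =>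
  pX c k (Nnl m u j) t x X - (c == u)%:R * Lc m j k t x X.

Definition Ccov_t (l : 'I_n) (c : 'I_p) (i k : 'I_n) (b : 'I_p) : Jfun :=
  fun t x X =>
  dt b (Cc l c i k) t x X
  + \sum_(m < n) Cc m c i k t x X * Gc l m b t x X
  - \sum_(m < n) Cc l c m k t x X * Gc m i b t x X
  - \sum_(m < n) Cc l c i m t x X * Gc m k b t x X
  + \sum_(u < p) Cc l u i k t x X * Hchr c u b t x X.
Definition Ccov_x (l : 'I_n) (c : 'I_p) (i k j : 'I_n) : Jfun := fun t x X =>
  dx j (Cc l c i k) t x X
  + \sum_(m < n) Cc m c i k t x X * Lc l m j t x X
  - \sum_(m < n) Cc l c m k t x X * Lc m i j t x X
  - \sum_(m < n) Cc l c i m t x X * Lc m k j t x X.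

Definition Rc1 (l i : 'I_n) (b : 'I_p) (k : 'I_n) : Jfun := fun t x X =>
  dx k (Gc l i b) t x X - dt b (Lc l i k) t x X
  + \sum_(m < n) (Gc m i b t x X * Lc l m k t x X
                  - Lc m i k t x X * Gc l m b t x X)
  + \sum_(u < p) \sum_(m < n) Cc l u i m t x X * Rnl1 m u b k t x X.
Definition Rc2 (l i j k : 'I_n) : Jfun := fun t x X =>
  dx k (Lc l i j) t x X - dx j (Lc l i k) t x X
  + \sum_(m < n) (Lc m i j t x X * Lc l m k t x X
                  - Lc m i k t x X * Lc l m j t x X)
  + \sum_(u < p) \sum_(m < n) Cc l u i m t x X * Rnl2 m u j k t x X.
Definition Pc1 (l : 'I_n) (c : 'I_p) (i : 'I_n) (b : 'I_p) (k : 'I_n) : Jfun :=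
  fun t x X =>
  pX c k (Gc l i b) t x X - Ccov_t l c i k b t x X
  + \sum_(u < p) \sum_(m < n) Cc l u i m t x X * Pnl1 m c u b k t x X.
Definition Pc2 (l : 'I_n) (c : 'I_p) (i j k : 'I_n) : Jfun := fun t x X =>
  pX c k (Lc l i j) t x X - Ccov_x l c i k j t x X
  + \sum_(u < p) \sum_(m < n) Cc l u i m t x X * Pnl2 m c u j k t x X.
Definition Sc3 (l : 'I_n) (b c : 'I_p) (i j k : 'I_n) : Jfun := fun t x X =>
  pX c k (Cc l b i j) t x X - pX b j (Cc l c i k) t x X
  + \sum_(m < n) (Cc m b i j t x X * Cc l c m k t x X
                  - Cc m c i k t x X * Cc l b m j t x X).

Definition Ric_tt (a b : 'I_p) : Jfun := fun t x X =>
  \sum_(u < p) Hcurv u a b u t x X.                       (* R_{ab} = H_{ab} *)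
Definition Ric_xt (i : 'I_n) (a : 'I_p) : Jfun := fun t x X =>
  \sum_(m < n) Rc1 m i a m t x X.
Definition Ric_xx (i j : 'I_n) : Jfun := fun t x X =>
  \sum_(m < n) Rc2 m i j m t x X.
Definition Ric_xv (i : 'I_n) (a : 'I_p) (j : 'I_n) : Jfun := fun t x X =>
  - \sum_(m < n) Pc2 m a i m j t x X.
Definition Ric_vx (a : 'I_p) (i j : 'I_n) : Jfun := fun t x X =>
  \sum_(m < n) Pc2 m a i j m t x X.
Definition Ric_vt (a : 'I_p) (i : 'I_n) (b : 'I_p) : Jfun := fun t x X =>
  \sum_(m < n) Pc1 m a i b m t x X.
Definition Ric_vv (a : 'I_p) (i : 'I_n) (b : 'I_p) (j : 'I_n) : Jfun :=
  fun t x X => \sum_(m < n) Sc3 m b a i j m t x X.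

(* adapted indices: dt^a, dx^i, delta x^i_a *)
Inductive Idx := IT of 'I_p | IX of 'I_n | IV of 'I_p & 'I_n.

Definition RicD (A B : Idx) : Jfun :=
  match A, B with
  | IT a, IT b => Ric_tt a b
  | IT _, IX _ => fun _ _ _ => 0
  | IT _, IV _ _ => fun _ _ _ => 0
  | IX i, IT a => Ric_xt i a
  | IX i, IX j => Ric_xx i j
  | IX i, IV a j => Ric_xv i a j
  | IV a i, IT b => Ric_vt a i b
  | IV a i, IX j => Ric_vx a i j
  | IV a i, IV b j => Ric_vv a i b j
  end.

Definition Gpot (A B : Idx) : Jfun :=
  match A, B with
  | IT a, IT b => hJ a b
  | IX i, IX j => gJ i j
  | IV a i, IV b j => fun t x X => hinvJ a b t x X * gJ i j t x X
  | _, _ => fun _ _ _ => 0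
  end.

Definition ScC : Jfun := fun t x X =>
  \sum_(a < p) \sum_(b < p) hinvJ a b t x X * Ric_tt a b t x X
  + \sum_(i < n) \sum_(j < n) ginvJ i j t x X * Ric_xx i j t x X
  + \sum_(a < p) \sum_(b < p) \sum_(i < n) \sum_(j < n)
      hJ a b t x X * ginvJ i j t x X * Ric_vv a i b j t x X.

Definition Hscal : Jfun := fun t x X =>
  \sum_(a < p) \sum_(b < p) hinvJ a b t x X * Ric_tt a b t x X.
Definition Rscal : Jfun := fun t x X =>
  \sum_(i < n) \sum_(j < n) ginvJ i j t x X * Ric_xx i j t x X.

Definition EinsteinAt (K : R) (T : Idx -> Idx -> Jfun) t x X : Prop :=
  forall A B : Idx,
    RicD A B t x X - ScC t x X / 2 * Gpot A B t x X = K * T A B t x X.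

Definition LocalSystemAt (K : R) (T : Idx -> Idx -> Jfun) t x X : Prop :=
  let HR := Hscal t x X + Rscal t x X in
  (forall a b : 'I_p,
        Ric_tt a b t x X - HR / 2 * h t a b = K * T (IT a) (IT b) t x X) /\
      (forall i j : 'I_n,
        Ric_xx i j t x X - HR / 2 * gval t x i j = K * T (IX i) (IX j) t x X) /\
      (forall (a b : 'I_p) (i j : 'I_n),
        - (HR / 2) * invmx (h t) a b * gval t x i j
          = K * T (IV a i) (IV b j) t x X) /\
      (forall (a : 'I_p) (i : 'I_n), 0 = T (IT a) (IX i) t x X) /\
      (forall (i : 'I_n) (a : 'I_p), Ric_xt i a t x X = K * T (IX i) (IT a) t x X) /\
      (forall (a : 'I_p) (i : 'I_n) (b : 'I_p), 0 = T (IV a i) (IT b) t x X) /\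
      (forall (a b : 'I_p) (i : 'I_n), 0 = T (IT a) (IV b i) t x X) /\
      (forall (i j : 'I_n) (a : 'I_p), 0 = T (IX i) (IV a j) t x X) /\
      (forall (a : 'I_p) (i j : 'I_n), 0 = T (IV a i) (IX j) t x X).

End MultiTimeEinstein.

From HB Require Import structures.
From mathcomp Require Import all_boot all_order all_algebra.
From mathcomp Require Import all_classical all_reals all_analysis.
From mathcomp Require Import ring.
Import Order.TTheory GRing.Theory Num.Theory.
Local Open Scope ring_scope.

(* For a quadratic Lagrangian the metric g_{ij} = (1/p) h_{mu nu} G^{(mu)(nu)}_{(i)(j)}
   depends only on (t, x), not on the velocities x^i_alpha.  Hence the Cartan
   tensor C^{i(c)}_{j(k)} vanishes and G^k_{jc}, L^i_{jk} are velocity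
   independent, so the d-curvatures P^{l (c)}_{ib(k)}, P^{l (c)}_{ij(k)} and
   S^{l(b)(c)}_{i(j)(k)} all vanish.  The Ricci components with a vertical index
   are therefore zero and Sc(C Gamma) = H + R.  Comparing the Einstein equations
   component by component gives the local system; where both Ric and G have a
   zero component the equation reads 0 = K T, i.e. T = 0 since K <> 0. *)

Lemma zero_eq_mulr {R : idomainType} {K : R} (v : R) :
  K != 0 -> (0 = K * v) <-> (0 = v).
Proof.
move=> K_neq0; split=> [/esym/eqP|<-]; last by rewrite mulr0.
by rewrite mulf_eq0 (negbTE K_neq0) => /eqP.
Qed.

Lemma derive1_const (R : realType) (g : R -> R) :
  (forall s, g s = g 0) -> derive1 g 0 = 0.
Proof.
move=> g_const; have -> : g = cst (g 0) by apply/funext => s; rewrite g_const.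
exact: derive1_cst.
Qed.

Section VelocityIndependence.
Variables (R : realType) (p n : nat).
Variable h : 'rV[R]_p -> 'M[R]_p.
Variable GG : 'rV[R]_p -> 'rV[R]_n -> 'I_p -> 'I_p -> 'I_n -> 'I_n -> R.

Definition velocity_indep (f : Jfun R p n) := forall t x X Y, f t x X = f t x Y.

Lemma pt_eq0 (f : Jfun R p n) a t x X :
  (forall t' x' Y, f t' x' Y = 0) -> pt a f t x X = 0.
Proof. by move=> f0; apply: derive1_const => s; rewrite !f0. Qed.

Lemma px_eq0 (f : Jfun R p n) k t x X :
  (forall t' x' Y, f t' x' Y = 0) -> px k f t x X = 0.
Proof. by move=> f0; apply: derive1_const => s; rewrite !f0. Qed.

Lemma pX_velocity_indep (f : Jfun R p n) c k t x X :
  velocity_indep f -> pX c k f t x X = 0.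
Proof. by move=> f_indep; apply: derive1_const => s; apply: f_indep. Qed.

Lemma velocity_indep0 (f : Jfun R p n) :
  (forall t' x' Y, f t' x' Y = 0) -> velocity_indep f.
Proof. by move=> f0 t x X Y; rewrite !f0. Qed.

Lemma dt_velocity_indep (f : Jfun R p n) a t x X :
  velocity_indep f -> dt h a f t x X = pt a f t x X.
Proof.
move=> f_indep; rewrite /dt big1 ?subr0 // => j _.
by rewrite big1 // => b _; rewrite pX_velocity_indep ?mulr0.
Qed.

Lemma dx_velocity_indep (f : Jfun R p n) k t x X :
  velocity_indep f -> dx h GG k f t x X = px k f t x X.
Proof.
move=> f_indep; rewrite /dx big1 ?subr0 // => j _.
by rewrite big1 // => b _; rewrite pX_velocity_indep ?mulr0.
Qed.

Lemma dt_eq0 (f : Jfun R p n) a t x X :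
  (forall t' x' Y, f t' x' Y = 0) -> dt h a f t x X = 0.
Proof. by move=> f0; rewrite dt_velocity_indep ?pt_eq0 //; apply: velocity_indep0. Qed.

Lemma dx_eq0 (f : Jfun R p n) k t x X :
  (forall t' x' Y, f t' x' Y = 0) -> dx h GG k f t x X = 0.
Proof. by move=> f0; rewrite dx_velocity_indep ?px_eq0 //; apply: velocity_indep0. Qed.

Lemma velocity_indep_Gc l i b : velocity_indep (Gc h GG l i b).
Proof.
move=> t x X Y; rewrite /Gc; congr (_ * _); apply: eq_bigr => m _.
by rewrite !dt_velocity_indep.
Qed.

Lemma velocity_indep_Lc l i j : velocity_indep (Lc h GG l i j).
Proof.
move=> t x X Y; rewrite /Lc; congr (_ * _); apply: eq_bigr => m _.
by rewrite !dx_velocity_indep.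
Qed.

Lemma Cc_eq0 i c j k t x X : Cc h GG i c j k t x X = 0.
Proof.
rewrite /Cc big1 ?mulr0 // => m _.
by rewrite !pX_velocity_indep // addr0 subr0 mulr0.
Qed.

Lemma velocity_indep_Cc l c i k : velocity_indep (Cc h GG l c i k).
Proof. by apply: velocity_indep0 => *; rewrite Cc_eq0. Qed.

Lemma Ccov_t_eq0 l c i k b t x X : Ccov_t h GG l c i k b t x X = 0.
Proof.
rewrite /Ccov_t dt_eq0; last by move=> *; rewrite Cc_eq0.
by rewrite !big1 ?subrr ?addr0 ?subr0 // => m _; rewrite Cc_eq0 mul0r.
Qed.

Lemma Ccov_x_eq0 l c i k j t x X : Ccov_x h GG l c i k j t x X = 0.
Proof.
rewrite /Ccov_x dx_eq0; last by move=> *; rewrite Cc_eq0.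
by rewrite !big1 ?subrr ?addr0 ?subr0 // => m _; rewrite Cc_eq0 mul0r.
Qed.

Lemma Pc1_eq0 l c i b k t x X : Pc1 h GG l c i b k t x X = 0.
Proof.
rewrite /Pc1 Ccov_t_eq0 subr0 pX_velocity_indep ?add0r; last exact: velocity_indep_Gc.
by rewrite big1 // => u _; rewrite big1 // => m _; rewrite Cc_eq0 mul0r.
Qed.

Lemma Pc2_eq0 l c i j k t x X : Pc2 h GG l c i j k t x X = 0.
Proof.
rewrite /Pc2 Ccov_x_eq0 subr0 pX_velocity_indep ?add0r; last exact: velocity_indep_Lc.
by rewrite big1 // => u _; rewrite big1 // => m _; rewrite Cc_eq0 mul0r.
Qed.

Lemma Sc3_eq0 l b c i j k t x X : Sc3 h GG l b c i j k t x X = 0.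
Proof.
rewrite /Sc3 !pX_velocity_indep; try exact: velocity_indep_Cc.
by rewrite subrr add0r big1 // => m _; rewrite !Cc_eq0 !mul0r subrr.
Qed.

Lemma Ric_vt_eq0 a i b t x X : Ric_vt h GG a i b t x X = 0.
Proof. by rewrite /Ric_vt big1 // => m _; rewrite Pc1_eq0. Qed.

Lemma Ric_xv_eq0 i a j t x X : Ric_xv h GG i a j t x X = 0.
Proof. by rewrite /Ric_xv big1 ?oppr0 // => m _; rewrite Pc2_eq0. Qed.

Lemma Ric_vx_eq0 a i j t x X : Ric_vx h GG a i j t x X = 0.
Proof. by rewrite /Ric_vx big1 // => m _; rewrite Pc2_eq0. Qed.

Lemma Ric_vv_eq0 a i b j t x X : Ric_vv h GG a i b j t x X = 0.
Proof. by rewrite /Ric_vv big1 // => m _; rewrite Sc3_eq0. Qed.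

Lemma ScC_HR t x X : ScC h GG t x X = Hscal h t x X + Rscal h GG t x X.
Proof.
rewrite /ScC /Hscal /Rscal [X in _ + X = _]big1 ?addr0 // => a _.
rewrite big1 // => b _; rewrite big1 // => i _; rewrite big1 // => j _.
by rewrite Ric_vv_eq0 mulr0.
Qed.

End VelocityIndependence.

Definition Ric_vertical_eq0 := (Ric_vt_eq0, Ric_xv_eq0, Ric_vx_eq0, Ric_vv_eq0).

Theorem mainTheorem5 (R : realType) (p n : nat)
  (h : 'rV[R]_p -> 'M[R]_p)
  (GG : 'rV[R]_p -> 'rV[R]_n -> 'I_p -> 'I_p -> 'I_n -> 'I_n -> R)
  (hp : (0 < p)%N)
  (hsym : forall t, (h t)^T = h t)
  (hnondeg : forall t, h t \in unitmx)
  (Gsym : forall t x a b i j, GG t x a b i j = GG t x b a j i)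
  (gnondeg : forall t x, gmat h GG t x \in unitmx)
  (K : R) (hK : K != 0)
  (T : Idx p n -> Idx p n -> Jfun R p n) :
  forall t x X,
    EinsteinAt h GG K T t x X <-> LocalSystemAt h GG K T t x X.
Proof.
move=> t x X; rewrite /EinsteinAt /LocalSystemAt /=.
split=> [E | [Ett [Exx [Evv [Etx [Ext [Evt [Etv [Exv Evx]]]]]]]]].
- repeat match goal with |- _ /\ _ => split end; move=> *;
    (try apply/(zero_eq_mulr _ hK));
    by rewrite -[RHS]E /= ScC_HR ?Ric_vertical_eq0 /hJ /hinvJ /gJ; ring.
- move=> [a|i|a i] [b|j|b j] /=;
    rewrite -?Ett -?Exx -?Evv -?Etx -?Ext -?Evt -?Etv -?Exv -?Evx;
    by rewrite ScC_HR ?Ric_vertical_eq0 /hJ /hinvJ /gJ; ring.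
Qed.
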